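(* Fix a finite relational vocabulary $\sigma$ and integers $n,d\ge 0$. In the generalized core model structure on the category $\mathbf{STRUCT}[\sigma_n]_{(d,0)}^{\widetilde{\mathcal{T}(\sigma_n)}}$ (both defined in the context), every object is both fibrant and cofibrant.
   Context: Let $\sigma=\langle R_1,\dots,R_l\rangle$ be a finite relational vocabulary, $R_i$ of arity $p_i$, and $\sigma_n$ its expansion by $n$ constant symbols; all structures are finite. For a $\sigma$-structure $\mathfrak{A}$, its Gaifman graph has vertex set $A$ and an edge between $a,b$ iff both occur in a tuple of some $R_i^{\mathfrak{A}}$; $d(\cdot,\cdot)$ is shortest-path distance, $d(\vec a,b)=\min_i d(a_i,b)$, $B_d^{\mathfrak{A}}(\vec a)=\{b: d(\vec a,b)\le d\}$, and the $d$-neighborhood $N_d^{\mathfrak{A}}(\vec a)$ is the $\sigma_n$-structure on $B_d^{\mathfrak{A}}(\vec a)$ with relations $R_i^{\mathfrak{A}}\cap B_d^{\mathfrak{A}}(\vec a)^{p_i}$ and constants $a_1,\dots,a_n$. Homomorphisms of $d$-neighborhoods are relation-preserving maps of balls sending $a_i\mapsto b_i$. $\widetilde{\mathcal{T}(\sigma_n)}$ is the $\sigma_n$-structure whose universe is the set of closed $\sigma_n$-terms (the constant symbols), constants interpreted as themselves and all relations empty. The category $\mathbf{STRUCT}[\sigma_n]_{(d,0)}^{\widetilde{\mathcal{T}(\sigma_n)}}$ has objects the $d$-neighborhoods $N_d^{\mathfrak{A}}(\vec a)$, the $0$-neighborhoods $N_0^{\mathfrak{A}}(a)$ and $\widetilde{\mathcal{T}(\sigma_n)}$;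 morphisms are homomorphisms of $d$-neighborhoods, the unique homomorphism $\widetilde{\mathcal{T}(\sigma_n)}\to N_d^{\mathfrak{A}}(\vec a)$, and the unique homomorphism $N_d^{\mathfrak{A}}(\vec a)\to N_0^{\mathfrak{A}}(a)$. The paper takes $\widetilde{\mathcal{T}(\sigma_n)}$ as initial and $N_0^{\mathfrak{A}}(a)$ as terminal object. Two objects $X,Y$ are homomorphically equivalent if there are morphisms $X\to Y$ and $Y\to X$. A retraction is a morphism $r:X\to Y$ such that $r\circ s=\mathrm{id}_Y$ for some morphism $s$. The generalized core model structure (of Droz and Zakharevich) is the model structure in which a morphism $f:X\to Y$ is a weak equivalence iff $X$ and $Y$ are homomorphically equivalent, and the acyclic fibrations are exactly the retractions (so cofibrations are the morphisms with the left lifting property with respect to all retractions, and fibrations are the morphisms with the right lifting property with respect to all acyclic cofibrations). An object is cofibrant if the map from the initial object is a cofibration and fibrant if the map to the terminal object is a fibration. *)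

From mathcomp Require Import all_boot.
Set Implicit Arguments. Unset Strict Implicit. Unset Printing Implicit Defensive.

Section CoreModel.
(* vocabulary sigma = <R_0,...,R_{l-1}>, R_i of arity p i; n constants; radius d *)
Variables (l : nat) (p : 'I_l -> nat) (n d : nat).

Record sstruct := SStruct {
  carrier : finType;
  rel : forall i : 'I_l, pred ((p i).-tuple carrier) }.
Arguments rel : clear implicits.

Definition gadj (A : sstruct) (x y : carrier A) : bool :=
  [exists i : 'I_l, exists t : (p i).-tuple (carrier A),
     [&& rel A i t, x \in t & y \in t]].

Fixpoint within (A : sstruct) (k : nat) (x y : carrier A) : bool :=
  if k is k'.+1 then within k' x y || [exists z, within k' x z && gadj z y]
  else x == y.

(* a pointed structure (A, a_1..a_n); it determines the d-neighborhood N_d^A(a) *)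
Record pointed := Pointed { pbase : sstruct; pts : n.-tuple (carrier pbase) }.

Definition inball (N : pointed) (x : carrier (pbase N)) : bool :=
  [exists j : 'I_n, within d (tnth (pts N) j) x].

Definition ball (N : pointed) := {x : carrier (pbase N) | inball x}.

Definition is_nhom (N M : pointed) (h : ball N -> ball M) : Prop :=
  (forall (i : 'I_l) (t : (p i).-tuple (ball N)),
     rel (pbase N) i (map_tuple val t) ->
     rel (pbase M) i (map_tuple val (map_tuple h t))) /\
  (forall (j : 'I_n) (x : ball N), val x = tnth (pts N) j ->
     val (h x) = tnth (pts M) j).

Definition nhom (N M : pointed) := {h : ball N -> ball M | is_nhom h}.

Lemma is_nhom_id (N : pointed) : is_nhom (@id (ball N)).
Proof.
split=> [i t H|j x H] //.
have E : map_tuple val (map_tuple id t) = map_tuple val t.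
  by apply: val_inj; rewrite /= map_id.
by rewrite E.
Qed.

Lemma is_nhom_comp (N M K : pointed) (g : nhom M K) (f : nhom N M) :
  is_nhom (fun x => sval g (sval f x)).
Proof.
case: g => g [g1 g2]; case: f => f [f1 f2]; split=> [i t H|j x H] /=.
- have E : map_tuple val (map_tuple (fun x => g (f x)) t) =
           map_tuple val (map_tuple g (map_tuple f t)).
    by apply: val_inj; rewrite /= -map_comp.
  by rewrite E; apply: g1; apply: f1.
- by apply: g2; apply: f2.
Qed.

Definition nhid (N : pointed) : nhom N N := exist _ id (is_nhom_id N).
Definition nhcomp (N M K : pointed) (g : nhom M K) (f : nhom N M) : nhom N K :=
  exist _ _ (is_nhom_comp g f).

(* objects of STRUCT[sigma_n]_(d,0)^T~ : the initial object T~(sigma_n),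
   the d-neighborhoods, and the terminal 0-neighborhood *)
Inductive obj := OInit | ONb of pointed | OTerm.

Definition Hom (X Y : obj) : Type :=
  match X, Y with
  | OInit, _ => unit
  | ONb N, ONb M => nhom N M
  | ONb _, OTerm => unit
  | OTerm, OTerm => unit
  | _, _ => Empty_set
  end.

Definition idm (X : obj) : Hom X X :=
  match X return Hom X X with
  | OInit => tt | ONb N => nhid N | OTerm => tt end.

Definition comp (X Y Z : obj) : Hom Y Z -> Hom X Y -> Hom X Z :=
  match X as x, Y as y, Z as z return Hom y z -> Hom x y -> Hom x z with
  | OInit, _, _ => fun _ _ => tt
  | ONb N, ONb M, ONb K => fun g f => nhcomp g f
  | ONb _, _, OTerm => fun _ _ => tt
  | OTerm, OTerm, OTerm => fun _ _ => tt
  | ONb _, OInit, _ => fun _ f => match f with end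
  | ONb _, ONb _, OInit => fun g _ => match g with end
  | ONb _, OTerm, OInit => fun g _ => match g with end
  | ONb _, OTerm, ONb _ => fun g _ => match g with end
  | OTerm, OInit, _ => fun _ f => match f with end
  | OTerm, ONb _, _ => fun _ f => match f with end
  | OTerm, OTerm, OInit => fun g _ => match g with end
  | OTerm, OTerm, ONb _ => fun g _ => match g with end
  end.

Definition from_init (X : obj) : Hom OInit X := tt.
Definition to_term (X : obj) : Hom X OTerm :=
  match X return Hom X OTerm with OInit => tt | ONb _ => tt | OTerm => tt end.

Definition hom_equiv (X Y : obj) : Prop :=
  inhabited (Hom X Y) /\ inhabited (Hom Y X).

Definition weak_equiv (X Y : obj) (f : Hom X Y) : Prop := hom_equiv X Y.

Definition retraction (X Y : obj) (r : Hom X Y) : Prop :=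
  exists s : Hom Y X, comp r s = idm Y.

Definition lifts (A B X Y : obj) (i : Hom A B) (q : Hom X Y) : Prop :=
  forall (u : Hom A X) (v : Hom B Y), comp q u = comp v i ->
    exists h : Hom B X, comp h i = u /\ comp q h = v.

Definition acyclic_fibration (X Y : obj) (r : Hom X Y) : Prop := retraction r.

Definition cofibration (A B : obj) (i : Hom A B) : Prop :=
  forall (X Y : obj) (r : Hom X Y), acyclic_fibration r -> lifts i r.

Definition acyclic_cofibration (A B : obj) (i : Hom A B) : Prop :=
  cofibration i /\ weak_equiv i.

Definition fibration (X Y : obj) (q : Hom X Y) : Prop :=
  forall (A B : obj) (i : Hom A B), acyclic_cofibration i -> lifts i q.

Definition cofibrant (X : obj) : Prop := cofibration (from_init X).
Definition fibrant (X : obj) : Prop := fibration (to_term X).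

End CoreModel.

(* Cofibrancy is formal: a map out of the initial object lifts against a
   retraction r through a section of r.  For fibrancy it suffices that every
   acyclic cofibration i : A -> B has a left inverse h, since u \o h then
   extends any u along i.  Between neighborhoods, homomorphic equivalence gives
   j : B -> A; by finiteness some power e of j \o i is idempotent, and
   e = g \o i with g = (j \o i)^k \o j.  Splitting e through its fixed points Q,
   e = s \o r with r \o s = id, makes r \o e : A -> Q a retraction, and lifting i
   against it in the square with top id_A and bottom r \o g yields h.  The only
   non-formal point is that Q is again a d-neighborhood of the constants: e
   fixes Q pointwise and preserves relations, so it maps every Gaifman path of
   length at most d starting at a constant to such a path inside Q. *)

From Pilot Require Import Defs.
From mathcomp Require Import all_boot zify.
From Stdlib Require Import ProofIrrelevance FunctionalExtensionality.

Set Implicit Arguments. Unset Strict Implicit. Unset Printing Implicit Defensive.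

Lemma iter_repeat (T : finType) (f : T -> T) :
  exists a q, iter a f =1 iter (a + q.+1) f.
Proof.
pose h (m : 'I_#|{ffun T -> T}|.+1) := [ffun x => iter m f x].
have /injectivePn [a [b neq_ab eq_hab]] : ~~ injectiveb h.
  by apply/injectiveP => /leq_card; rewrite card_ord ltnn.
have eq_iter (m m' : 'I_#|{ffun T -> T}|.+1) : h m = h m' -> iter m f =1 iter m' f.
  by move=> E x; have := congr1 (fun g : {ffun T -> T} => g x) E; rewrite !ffunE.
case: (ltngtP a b) => [lt_ab | lt_ba | /val_inj eq_ab]; last by rewrite eq_ab eqxx in neq_ab.
- by exists a, (b - a.+1); rewrite -addSnnS subnKC //; apply: eq_iter.
- by exists b, (a - b.+1); rewrite -addSnnS subnKC // => x; rewrite (eq_iter _ _ eq_hab).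
Qed.

Lemma iter_periodic (T : Type) (f : T -> T) a q :
  iter a f =1 iter (a + q) f -> forall t, iter (t * q + a) f =1 iter a f.
Proof.
move=> per; elim=> [|t IH] x //.
by rewrite mulSnr -addnA [q + a]addnC iterD -per -iterD IH.
Qed.

Lemma iter_idempotent (T : finType) (f : T -> T) :
  exists k, forall x, iter k.+1 f (iter k.+1 f x) = iter k.+1 f x.
Proof.
have [a [q per]] := iter_repeat f.
exists (a * q.+1 + q) => x; set m := (a * q.+1 + q).+1.
have le_am : a <= m by rewrite /m; nia.
have per_m y : iter a f (iter m f y) = iter a f y.
  by rewrite -iterD addnC; have := iter_periodic per a.+1; rewrite /m mulSnr addnS.
rewrite -{1}(subnK le_am) iterD per_m.
by rewrite -iterD subnK.
Qed.

Section Neighborhoods.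
Variables (l : nat) (p : 'I_l -> nat) (n d : nat).

Lemma within_refl (A : sstruct p) k (x : carrier A) : within k x x.
Proof. by elim: k => [|k IH] /=; rewrite ?eqxx ?IH. Qed.

Lemma withinS (A : sstruct p) k (x y : carrier A) :
  within k.+1 x y = within k x y || [exists z, within k x z && gadj z y].
Proof. by []. Qed.

Lemma within_mono (A : sstruct p) k k' (x y : carrier A) :
  k <= k' -> within k x y -> within k' x y.
Proof.
elim: k' => [|k' IH]; first by rewrite leqn0 => /eqP->.
by rewrite leq_eqVlt ltnS => /predU1P [->|/IH le_kk'] // /le_kk' /= ->.
Qed.

Lemma within_gadj (A : sstruct p) k (x z y : carrier A) :
  within k x z -> gadj z y -> within k.+1 x y.
Proof.
by move=> xz zy; rewrite withinS; apply/orP; right; apply/existsP; exists z; rewrite xz.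
Qed.

Lemma ball_tuple (N : pointed p n) (x0 : ball d N) m (t : m.-tuple (carrier (pbase N))) :
  (forall w, w \in t -> inball d w) -> exists tb : m.-tuple (ball d N), map_tuple val tb = t.
Proof.
move=> t_in; exists (map_tuple (insubd x0) t); apply: val_inj => /=.
by rewrite -map_comp map_id_in // => w /t_in; apply: insubdK.
Qed.

Definition pt_ball (N : pointed p n) (j : 'I_n) : ball d N :=
  exist _ (tnth (pts N) j) (introT existsP (ex_intro _ j (within_refl _ _))).

Lemma nhom_pt_ball (N M : pointed p n) (h : ball d N -> ball d M) j :
  is_nhom h -> h (pt_ball N j) = pt_ball M j.
Proof. by move=> [_ h_pts]; apply: val_inj; apply: h_pts. Qed.

Lemma nhom_eq (N M : pointed p n) (f g : nhom d N M) : sval f =1 sval g -> f = g.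
Proof.
case: f g => [f f_hom] [g g_hom] /= /functional_extensionality eq_fg.
by subst g; congr exist; apply: proof_irrelevance.
Qed.

Section IdempotentSplitting.
Variables (N : pointed p n) (e : ball d N -> ball d N).
Hypotheses (e_hom : is_nhom e) (e_idem : forall x, e (e x) = e x).

Definition fixed := {x : ball d N | e x == x}.

Definition fixed_val (y : fixed) : carrier (pbase N) := val (val y).

Definition fixed_struct : sstruct p :=
  SStruct (fun i t => @Defs.rel _ _ (pbase N) i (map_tuple fixed_val t)).

Definition fixed_pt (j : 'I_n) : fixed :=
  exist _ (pt_ball N j) (introT eqP (nhom_pt_ball j e_hom)).

Definition fixed_pointed : pointed p n :=
  @Pointed _ _ _ fixed_struct [tuple fixed_pt j | j < n].

Definition fixed_proj (x : ball d N) : fixed := exist _ (e x) (introT eqP (e_idem x)).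

Lemma fixed_proj_rel i (t : (p i).-tuple (ball d N)) :
  @Defs.rel _ _ (pbase N) i (map_tuple val t) ->
  @Defs.rel _ _ fixed_struct i (map_tuple fixed_proj t).
Proof.
move=> /(proj1 e_hom); congr (is_true (@Defs.rel _ _ _ _ _)).
by apply: val_inj; rewrite /= -!map_comp.
Qed.

Lemma within_fixed_proj k j (x : ball d N) : k <= d ->
  within k (tnth (pts N) j) (val x) ->
  within (A := fixed_struct) k (fixed_pt j) (fixed_proj x).
Proof.
elim: k x => [|k IH] x le_kd.
  move=> /eqP pt_x; have -> : x = pt_ball N j by apply: val_inj.
  by apply/eqP/val_inj; rewrite /= nhom_pt_ball.
rewrite withinS => /orP [near_x | /existsP [z /andP [near_z /existsP [i /existsP [t]]]]].
  by rewrite withinS (IH x (ltnW le_kd) near_x).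
case/and3P => t_rel z_t x_t.
have t_ball w : w \in t -> inball d w.
  move=> w_t; apply/existsP; exists j; apply: within_mono le_kd _.
  apply: within_gadj near_z _; apply/existsP; exists i; apply/existsP; exists t.
  by rewrite t_rel z_t w_t.
have [tb tb_t] := ball_tuple x t_ball.
rewrite -tb_t (mem_map val_inj) in t_rel x_t z_t.
move: z_t near_z => /mapP [zb zb_tb ->] near_zb.
apply: within_gadj (IH zb (ltnW le_kd) near_zb) _.
apply/existsP; exists i; apply/existsP; exists (map_tuple fixed_proj tb).
by apply/and3P; split; [exact: fixed_proj_rel | exact: map_f | exact: map_f].
Qed.

Lemma inball_fixed (y : fixed) : inball d (N := fixed_pointed) y.
Proof.
have y_proj : fixed_proj (val y) = y by apply/val_inj/eqP; apply: valP y.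
have /existsP [j near_y] := valP (val y).
apply/existsP; exists j; rewrite tnth_mktuple -y_proj.
exact: within_fixed_proj.
Qed.

Definition split_proj (x : ball d N) : ball d fixed_pointed :=
  exist _ (fixed_proj x) (inball_fixed _).

Definition split_incl (y : ball d fixed_pointed) : ball d N := val (val y).

Lemma split_proj_hom : is_nhom split_proj.
Proof.
split=> [i t t_rel | j x x_pt].
  have := fixed_proj_rel t_rel; congr (is_true (@Defs.rel _ _ _ _ _)).
  by apply: val_inj; rewrite /= -!map_comp.
by apply/val_inj/val_inj; rewrite /= tnth_mktuple /= (proj2 e_hom j x x_pt).
Qed.

Lemma split_incl_hom : is_nhom split_incl.
Proof.
split=> [i t t_rel | j y y_pt]; last by rewrite /split_incl y_pt /= tnth_mktuple.
suff -> : map_tuple val (map_tuple split_incl t) = map_tuple fixed_val (map_tuple val t) by [].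
by apply: val_inj; rewrite /= -!map_comp.
Qed.

Lemma split_proj_incl : cancel split_incl split_proj.
Proof. by move=> y; apply/val_inj/val_inj/eqP; apply: valP (val y). Qed.

End IdempotentSplitting.

Lemma nhom_idempotent_split (N : pointed p n) (e : nhom d N N) :
    (forall x, sval e (sval e x) = sval e x) ->
  exists (Q : pointed p n) (r : nhom d N Q) (s : nhom d Q N),
    cancel (sval s) (sval r) /\ forall x, sval s (sval r x) = sval e x.
Proof.
case: e => e e_hom /= e_idem.
exists (fixed_pointed e_hom), (exist _ _ (split_proj_hom e_hom e_idem)).
by exists (exist _ _ (split_incl_hom e_hom)); split=> //; apply: split_proj_incl.
Qed.

Lemma is_nhom_iter (N : pointed p n) (f : nhom d N N) m : is_nhom (iter m (sval f)).
Proof.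
elim: m => [|m IH]; first exact: is_nhom_id.
exact: (is_nhom_comp f (exist _ _ IH)).
Qed.

Definition nhiter (N : pointed p n) (f : nhom d N N) m : nhom d N N :=
  exist _ _ (is_nhom_iter f m).

Lemma cofibration_nhom_retract (N M : pointed p n) (i : nhom d N M) (j : nhom d M N) :
  cofibration (A := ONb N) (B := ONb M) i -> exists h : nhom d M N, cancel (sval i) (sval h).
Proof.
move=> cof_i; pose F := nhcomp j i.
have [k F_idem] := iter_idempotent (sval F).
pose g := nhcomp (nhiter F k) j; pose e := nhcomp g i.
have e_iter x : sval e x = iter k.+1 (sval F) x by rewrite iterSr.
have e_idem x : sval e (sval e x) = sval e x by rewrite !e_iter F_idem.
have [Q [r [s [rs sr]]]] := nhom_idempotent_split e_idem.
pose R : Hom d (ONb N) (ONb Q) := nhcomp r e.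
have R_retraction : retraction R.
  exists s; apply: nhom_eq => y; change (sval r (sval e (sval s y)) = y).
  by rewrite -sr !rs.
have [|h [h_i _]] :=
  cof_i _ _ R R_retraction (idm d (ONb N)) (nhcomp r g : Hom d (ONb M) (ONb Q)).
  exact: nhom_eq.
by exists h => x; have := congr1 (fun f : nhom d N N => sval f x) h_i.
Qed.

Lemma comp_assoc (W X Y Z : obj p n) (h : Hom d Y Z) (g : Hom d X Y) (f : Hom d W X) :
  Defs.comp h (Defs.comp g f) = Defs.comp (Defs.comp h g) f.
Proof. by case: W X Y Z h g f => [|?|] [|?|] [|?|] [|?|] // *; apply: nhom_eq. Qed.

Lemma comp_idl (X Y : obj p n) (f : Hom d X Y) : Defs.comp (idm d Y) f = f.
Proof. case: X Y f => [|?|] [|?|] f; by [case: f | apply: nhom_eq]. Qed.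

Lemma comp_idr (X Y : obj p n) (f : Hom d X Y) : Defs.comp f (idm d X) = f.
Proof. case: X Y f => [|?|] [|?|] f; by [case: f | apply: nhom_eq]. Qed.

Lemma from_init_uniq (X : obj p n) (f g : Hom d (@OInit l p n) X) : f = g.
Proof. by case: f; case: g. Qed.

Lemma to_term_uniq (X : obj p n) (f g : Hom d X (@OTerm l p n)) : f = g.
Proof. by case: X f g => [|?|] [] []. Qed.

Lemma acyclic_cofibration_retract (A B : obj p n) (i : Hom d A B) :
  acyclic_cofibration i -> exists h : Hom d B A, Defs.comp h i = idm d A.
Proof.
move=> [cof_i [_ [j]]].
case: A B i j cof_i => [|N|] [|M|] // i j cof_i; try by exists tt.
have [h h_i] := cofibration_nhom_retract j cof_i.
by exists h; apply: nhom_eq.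
Qed.

Lemma cofibrant_obj (X : obj p n) : cofibrant d X.
Proof.
move=> Y Z r [s rs] u v _; exists (Defs.comp s v); split; first exact: from_init_uniq.
by rewrite comp_assoc rs comp_idl.
Qed.

Lemma fibrant_obj (X : obj p n) : fibrant d X.
Proof.
move=> A B i /acyclic_cofibration_retract [h h_i] u v _.
exists (Defs.comp u h); split; last exact: to_term_uniq.
by rewrite -comp_assoc h_i comp_idr.
Qed.

End Neighborhoods.

Theorem proposition9 (l : nat) (p : 'I_l -> nat) (n d : nat)
    (X : @obj l p n) :
  @cofibrant l p n d X /\ @fibrant l p n d X.
Proof. by split; [apply: cofibrant_obj | apply: fibrant_obj]. Qed.
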